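(* Let $G=(V,E)$ be a connected undirected graph with $V=\{1,\dots,N\}$, let $K\ge2$, $d\ge0$ an integer, $\gamma\in(0,1]$, and let every agent run Exp3-Coop (defined in the context) with delay $d$ and learning rate $\eta=\gamma/(Ke(d+1))$. Then for every $T\ge1$ and every fixed (oblivious) sequence of loss vectors $\boldsymbol\ell_1,\dots,\boldsymbol\ell_T\in[0,1]^K$, $$R_T^{\mathrm{coop}}\le 2d+\frac{Ke(d+1)\ln K}{\gamma}+\gamma\left(\frac{\alpha(G_{\le d})}{2(1-e^{-1})(d+1)N}+\frac{3}{Ke}\right)T.$$
   Context: Setting. $A=\{1,\dots,K\}$ is the action set; an adversary fixes in advance loss vectors $\boldsymbol\ell_t=(\ell_t(1),\dots,\ell_t(K))\in[0,1]^K$, $t\ge1$. For $v\in V$ and $s\ge0$, $N_{\le s}(v)$ is the set of nodes at shortest-path distance at most $s$ from $v$ in $G$ (so $v\in N_{\le s}(v)$). $G_{\le d}$ is the graph on $V$ with an edge between distinct $u,v$ iff their shortest-path distance in $G$ is at most $d$ ($G_{\le 0}$ has no edges), and $\alpha(G_{\le d})$ is its independence number (maximum size of a set of pairwise nonadjacent vertices). Exp3-Coop. Each agent $v\in V$ keeps weights $w_t(i,v)$, with $w_1(i,v)=1$. At round $t=1,2,\dots$: each agent $v$ computes $W_t(v)=\sum_{j\in A}w_t(j,v)$, $p_t(i,v)=w_t(i,v)/W_t(v)$, and draws $I_t(v)\in A$ from $\boldsymbol p_t(v)=(p_t(1,v),\dots,p_t(K,v))$, the draws of different agents being independent conditionally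 on the past; agent $v$ incurs loss $\ell_t(I_t(v))$. Then each agent updates $w_{t+1}(i,v)=p_t(i,v)\exp(-\eta\,\widehat\ell_t(i,v))$, where $$\widehat\ell_t(i,v)=\begin{cases}\dfrac{\ell_{t-d}(i)}{q_{d,t-d}(i,v)}B_{d,t-d}(i,v)&t>d,\\ 0&\text{otherwise},\end{cases}$$ $B_{d,s}(i,v)=\mathbb{1}\{\exists v'\in N_{\le d}(v): I_s(v')=i\}$ and $q_{d,s}(i,v)=1-\prod_{v'\in N_{\le d}(v)}(1-p_s(i,v'))$. (Operationally, this information reaches $v$ through messages forwarded along $G$ at one hop per round.) Average welfare regret: $$R_T^{\mathrm{coop}}=\frac1N\sum_{v\in V}\mathbb E\Bigl[\sum_{t=1}^T\ell_t(I_t(v))\Bigr]-\min_{i\in A}\sum_{t=1}^T\ell_t(i),$$ the expectation being over the agents' internal randomization. *)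

From Stdlib Require Import Reals Lra Lia List.
Import ListNotations.
Open Scope R_scope.

(* Conventions: agents V = {0,...,N-1} (paper's {1,...,N} shifted),
   actions A = {0,...,K-1}, rounds t = 1,2,...  The graph is given by a
   boolean adjacency relation [adj] on nat. *)

Fixpoint sumR (n : nat) (f : nat -> R) : R :=
  match n with O => 0 | S m => sumR m f + f m end.

Fixpoint prodR (n : nat) (f : nat -> R) : R :=
  match n with O => 1 | S m => prodR m f * f m end.

Fixpoint minR (n : nat) (f : nat -> R) : R :=
  match n with O => f O | S m => Rmin (minR m f) (f (S m)) end.

(* inball adj N s v u = true  iff  u is at shortest-path distance <= s from v
   in G, i.e. u \in N_{<=s}(v) (walks of length <= s through vertices of V). *)
Fixpoint inball (adj : nat -> nat -> bool) (N s v u : nat) : bool :=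
  match s with
  | O => Nat.eqb u v
  | S s' => orb (inball adj N s' v u)
            (existsb (fun w => andb (inball adj N s' v w) (adj w u)) (seq 0 N))
  end.

Definition connected_graph (adj : nat -> nat -> bool) (N : nat) : Prop :=
  (1 <= N)%nat /\
  (forall u v, adj u v = true -> (u < N)%nat /\ (v < N)%nat) /\
  (forall u v, adj u v = adj v u) /\
  (forall u, adj u u = false) /\
  (forall u v, (u < N)%nat -> (v < N)%nat -> exists s, inball adj N s u v = true).

(* S is an independent set of G_{<=d}: distinct vertices, pairwise at
   distance > d *)
Definition indep_Gd (adj : nat -> nat -> bool) (N d : nat) (S : list nat) : Prop :=
  NoDup S /\ (forall u, In u S -> (u < N)%nat) /\
  (forall u v, In u S -> In v S -> u <> v -> inball adj N d u v = false).

Definition indep_number (adj : nat -> nat -> bool) (N d a : nat) : Prop :=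
  (exists S, indep_Gd adj N d S /\ length S = a) /\
  (forall S, indep_Gd adj N d S -> (length S <= a)%nat).

(* An action profile: list a with nth v a 0 = action of agent v.
   A history h = [a_t; a_{t-1}; ...; a_1] (most recent first). *)

Definition qd (adj : nat -> nat -> bool) (N d : nat) (p : nat -> nat -> R)
  (i v : nat) : R :=
  1 - prodR N (fun u => if inball adj N d v u then 1 - p i u else 1).

Definition Bd (adj : nat -> nat -> bool) (N d : nat) (a : list nat) (i v : nat) : R :=
  if existsb (fun u => andb (inball adj N d v u) (Nat.eqb (nth u a O) i)) (seq 0 N)
  then 1 else 0.

(* Exp3-Coop.  pseq h = [p_{t+1}; p_t; ...; p_1] for h = [a_t; ...; a_1],
   where p_s i v = p_s(i,v) is the distribution of agent v at round s. *)
Fixpoint pseq (adj : nat -> nat -> bool) (N K d : nat) (eta : R)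
  (ell : nat -> nat -> R) (h : list (list nat)) : list (nat -> nat -> R) :=
  match h with
  | [] => [fun _ _ => / INR K]
  | _ :: h' =>
      let ps := pseq adj N K d eta ell h' in
      let t := length h in
      let p := hd (fun _ _ => 0) ps in
      let lhat := fun i v =>
        if Nat.ltb d t then
          ell (t - d)%nat i / qd adj N d (nth d ps (fun _ _ => 0)) i v
          * Bd adj N d (nth d h []) i v
        else 0 in
      let w := fun i v => p i v * exp (- eta * lhat i v) in
      (fun i v => w i v / sumR K (fun j => w j v)) :: ps
  end.

(* sum over all profiles a (agents m..N-1 still to be drawn, acc = actions
   already drawn for agents 0..length acc - 1) of prod_v p(a_v,v) * f a *)
Fixpoint sprof (K : nat) (m : nat) (acc : list nat) (p : nat -> nat -> R)
  (f : list nat -> R) : R :=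
  match m with
  | O => f acc
  | S m' => sumR K (fun i => p i (length acc) * sprof K m' (acc ++ [i]) p f)
  end.

(* expected value of the average (over agents) loss incurred in the next
   R rounds, given the history h so far *)
Fixpoint exp_avg_loss (adj : nat -> nat -> bool) (N K d : nat) (eta : R)
  (ell : nat -> nat -> R) (R : nat) (h : list (list nat)) : Rdefinitions.R :=
  match R with
  | O => 0
  | S R' =>
      let p := hd (fun _ _ => 0) (pseq adj N K d eta ell h) in
      let t := S (length h) in
      sprof K N [] p (fun a =>
        / INR N * sumR N (fun v => ell t (nth v a O))
        + exp_avg_loss adj N K d eta ell R' (a :: h))
  end.

Definition regret_coop (adj : nat -> nat -> bool) (N K d : nat) (eta : R)
  (ell : nat -> nat -> R) (T : nat) : R :=
  exp_avg_loss adj N K d eta ell T []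
  - minR (K - 1) (fun i => sumR T (fun s => ell (S s) i)).

(* Each agent runs Exp3 on importance-weighted loss estimates that arrive with delay d: at round t
   agent v learns which actions were played at round t - d by the agents of its d-ball and
   reweights the loss of action i by the probability q that some of them played it.  Given the
   history up to round t - d - 1 these estimates are unbiased, so the usual potential argument
   on ln p_t(k, v) (with exp (-x) <= 1 - x + 3x^2/4) bounds the regret of each agent by
   ln K / eta, plus d rounds lost at the start, plus a drift of eta d per round caused by the
   delay, plus a variance term of order eta * sum_i p_{t-d}(i, v) / q.  The condition
   eta K e (d + 1) <= 1 keeps p_t below (1 + 1/d)^d p_{t-d} <= e p_{t-d}.  Finally
   q >= P/(1+P), where P is the mass of action i on the d-ball, and a greedy choice of an
   independent set of G_{<=d} bounds the variance summed over agents by K alpha + N. *)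

From Stdlib Require Import Reals List.
From Stdlib Require Import Lra Lia FunctionalExtensionality Bool.
Import ListNotations.
Open Scope R_scope.

Lemma sumR_ext n f g : (forall i, (i < n)%nat -> f i = g i) -> sumR n f = sumR n g.
Proof.
  induction n as [|n IH]; simpl; intros H; auto.
  rewrite IH by (intros; apply H; lia). rewrite H by lia; auto.
Qed.

Lemma sumR_add n f g : sumR n (fun i => f i + g i) = sumR n f + sumR n g.
Proof. induction n; simpl; lra. Qed.

Lemma sumR_sub n f g : sumR n (fun i => f i - g i) = sumR n f - sumR n g.
Proof. induction n; simpl; lra. Qed.

Lemma sumR_mult_l n c f : sumR n (fun i => c * f i) = c * sumR n f.
Proof. induction n as [|n IH]; simpl; [lra|]. rewrite IH; lra. Qed.

Lemma sumR_mult_r n c f : sumR n (fun i => f i * c) = sumR n f * c.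
Proof. induction n as [|n IH]; simpl; [lra|]. rewrite IH; lra. Qed.

Lemma sumR_const n c : sumR n (fun _ => c) = INR n * c.
Proof. induction n as [|n IH]; simpl sumR; [simpl; lra|]. rewrite IH, S_INR; lra. Qed.

Lemma sumR_le n f g : (forall i, (i < n)%nat -> f i <= g i) -> sumR n f <= sumR n g.
Proof.
  induction n as [|n IH]; simpl; intros H; [lra|].
  assert (sumR n f <= sumR n g) by (apply IH; intros; apply H; lia).
  pose proof (H n ltac:(lia)); lra.
Qed.

Lemma sumR_nonneg n f : (forall i, (i < n)%nat -> 0 <= f i) -> 0 <= sumR n f.
Proof.
  intros H. rewrite <- (Rmult_0_r (INR n)), <- sumR_const. now apply sumR_le.
Qed.

Lemma sumR_pos n f : (0 < n)%nat -> (forall i, (i < n)%nat -> 0 < f i) -> 0 < sumR n f.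
Proof.
  destruct n as [|n]; [lia|]. intros _ H. simpl.
  assert (0 <= sumR n f) by (apply sumR_nonneg; intros; left; apply H; lia).
  pose proof (H n ltac:(lia)); lra.
Qed.

Lemma sumR_term_le n f i :
  (i < n)%nat -> (forall j, (j < n)%nat -> 0 <= f j) -> f i <= sumR n f.
Proof.
  induction n as [|n IH]; intros Hi H; [lia|]. simpl.
  destruct (Nat.eq_dec i n) as [->|Hne].
  - assert (0 <= sumR n f) by (apply sumR_nonneg; intros; apply H; lia). lra.
  - assert (f i <= sumR n f) by (apply IH; [lia|intros; apply H; lia]).
    pose proof (H n ltac:(lia)); lra.
Qed.

Lemma sumR_comm n m (f : nat -> nat -> R) :
  sumR n (fun i => sumR m (fun j => f i j)) = sumR m (fun j => sumR n (fun i => f i j)).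
Proof.
  induction n as [|n IH]; simpl.
  - rewrite sumR_const; lra.
  - rewrite IH, <- sumR_add. reflexivity.
Qed.

Lemma sumR_succ_l n f : sumR (S n) f = f O + sumR n (fun i => f (S i)).
Proof. induction n as [|n IH]; simpl in *; [lra|]. rewrite IH; lra. Qed.

Lemma sumR_split a b f : sumR (a + b) f = sumR a f + sumR b (fun i => f (a + i)%nat).
Proof.
  induction b as [|b IH]; simpl.
  - rewrite Nat.add_0_r; lra.
  - rewrite Nat.add_succ_r; simpl. rewrite IH; lra.
Qed.

Lemma sumR_delta n (g : nat -> R) i :
  (i < n)%nat -> sumR n (fun j => if Nat.eqb j i then g j else 0) = g i.
Proof.
  induction n as [|n IH]; intros Hi; [lia|]. simpl.
  destruct (Nat.eqb_spec n i) as [->|Hne].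
  - rewrite (sumR_ext i _ (fun _ => 0)), sumR_const; [lra|].
    intros j Hj. destruct (Nat.eqb_spec j i); [lia|reflexivity].
  - rewrite IH by lia. lra.
Qed.

Lemma prodR_ext n f g : (forall i, (i < n)%nat -> f i = g i) -> prodR n f = prodR n g.
Proof.
  induction n as [|n IH]; simpl; intros H; auto.
  rewrite IH by (intros; apply H; lia). rewrite H by lia; auto.
Qed.

Lemma prodR_succ_l n f : prodR (S n) f = f O * prodR n (fun i => f (S i)).
Proof. induction n as [|n IH]; simpl in *; [lra|]. rewrite IH; lra. Qed.

Lemma prodR_nonneg n f : (forall i, (i < n)%nat -> 0 <= f i) -> 0 <= prodR n f.
Proof.
  induction n as [|n IH]; simpl; intros H; [lra|].
  apply Rmult_le_pos; [apply IH; intros|]; apply H; lia.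
Qed.

Lemma prodR_le n f g : (forall i, (i < n)%nat -> 0 <= f i <= g i) -> prodR n f <= prodR n g.
Proof.
  induction n as [|n IH]; simpl; intros H; [lra|].
  apply Rmult_le_compat; try (apply H; lia).
  - apply prodR_nonneg; intros; apply H; lia.
  - apply IH; intros; apply H; lia.
Qed.

Lemma prodR_le_term n f k :
  (k < n)%nat -> (forall i, (i < n)%nat -> 0 <= f i <= 1) -> prodR n f <= f k.
Proof.
  induction n as [|n IH]; intros Hk H; [lia|]. simpl.
  pose proof (H n ltac:(lia)).
  assert (0 <= prodR n f) by (apply prodR_nonneg; intros; apply H; lia).
  destruct (Nat.eq_dec k n) as [->|Hne].
  - assert (prodR n f <= prodR n (fun _ => 1)) by (apply prodR_le; intros; apply H; lia).
    assert (prodR n (fun _ => 1) = 1) by (clear; induction n; simpl; lra). nra.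
  - assert (prodR n f <= f k) by (apply IH; [lia|intros; apply H; lia]). nra.
Qed.

Lemma prodR_exp n f : prodR n (fun i => exp (f i)) = exp (sumR n f).
Proof.
  induction n as [|n IH]; simpl.
  - now rewrite exp_0.
  - now rewrite IH, exp_plus.
Qed.

Lemma existsb_indicator (P : nat -> bool) n :
  (if existsb P (seq 0 n) then 1 else 0) = 1 - prodR n (fun u => if P u then 0 else 1).
Proof.
  induction n as [|n IH]; [simpl; lra|].
  rewrite seq_S, existsb_app. simpl prodR. simpl existsb.
  destruct (existsb P (seq 0 n)), (P n); simpl in *; lra.
Qed.

Lemma exp_le_exp x y : x <= y -> exp x <= exp y.
Proof. intros [H| ->]; [left; now apply exp_increasing | lra]. Qed.

Lemma one_sub_le_exp_neg x : 1 - x <= exp (- x).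
Proof. pose proof (exp_ineq1_le (- x)); lra. Qed.

Lemma ln_le_sub_1 y : 0 < y -> ln y <= y - 1.
Proof. intros Hy. pose proof (exp_ineq1_le (ln y)) as H. rewrite exp_ln in H; lra. Qed.

Lemma ln_INR_nonneg n : (1 <= n)%nat -> 0 <= ln (INR n).
Proof.
  intros Hn. apply le_INR in Hn. simpl in Hn. destruct Hn as [Hn|Hn].
  - rewrite <- ln_1. left. apply ln_increasing; lra.
  - rewrite <- Hn, ln_1; lra.
Qed.

(* From exp x >= (1 + x/2)^2. *)
Lemma exp_neg_le_quadratic x : 0 <= x -> exp (- x) <= 1 - x + 3 / 4 * x ^ 2.
Proof.
  intros Hx. rewrite exp_Ropp.
  assert (Hsq : (1 + x / 2) ^ 2 <= exp x).
  { replace (exp x) with (exp (x / 2) * exp (x / 2)) by (rewrite <- exp_plus; f_equal; field).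
    pose proof (exp_ineq1_le (x / 2)). simpl. rewrite Rmult_1_r. apply Rmult_le_compat; lra. }
  assert (0 < (1 + x / 2) ^ 2) by (apply pow_lt; lra).
  apply Rle_trans with (/ (1 + x / 2) ^ 2); [now apply Rinv_le_contravar|].
  apply Rmult_le_reg_r with ((1 + x / 2) ^ 2); auto. rewrite Rinv_l by lra.
  assert (0 <= x ^ 3) by (apply pow_le; lra). assert (0 <= x ^ 4) by (apply pow_le; lra).
  replace ((1 - x + 3 / 4 * x ^ 2) * (1 + x / 2) ^ 2)
    with (1 + (x ^ 3 / 2 + 3 * x ^ 4 / 16)) by field. lra.
Qed.

Lemma exp_pow x n : exp x ^ n = exp (INR n * x).
Proof.
  induction n as [|n IH]; simpl pow.
  - now rewrite Rmult_0_l, exp_0.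
  - rewrite IH, S_INR, <- exp_plus. f_equal; ring.
Qed.

Lemma one_add_inv_pow_le_exp1 d : (1 + / INR d) ^ d <= exp 1.
Proof.
  destruct d as [|d]; [simpl; pose proof (exp_ineq1_le 1); lra|].
  assert (0 < INR (S d)) by (apply lt_0_INR; lia).
  apply Rle_trans with (exp (/ INR (S d)) ^ S d).
  - apply pow_incr. pose proof (Rinv_0_lt_compat _ H). split; [lra|apply exp_ineq1_le].
  - rewrite exp_pow. right. f_equal. field. lra.
Qed.

Section ProductDistribution.
Variable K : nat.

Lemma sprof_ext m acc p f g :
  (forall a, f a = g a) -> sprof K m acc p f = sprof K m acc p g.
Proof.
  revert acc; induction m as [|m IH]; simpl; intros acc H; auto.
  apply sumR_ext; intros. now rewrite IH.
Qed.

Lemma sprof_add m acc p f g :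
  sprof K m acc p (fun a => f a + g a) = sprof K m acc p f + sprof K m acc p g.
Proof.
  revert acc; induction m as [|m IH]; simpl; intros acc; auto.
  rewrite <- sumR_add. apply sumR_ext; intros. rewrite IH; lra.
Qed.

Lemma sprof_mult_l m acc p c f : sprof K m acc p (fun a => c * f a) = c * sprof K m acc p f.
Proof.
  revert acc; induction m as [|m IH]; simpl; intros acc; auto.
  rewrite <- sumR_mult_l. apply sumR_ext; intros. rewrite IH; lra.
Qed.

Lemma sprof_sumR m acc p n (f : nat -> list nat -> R) :
  sprof K m acc p (fun a => sumR n (fun j => f j a)) = sumR n (fun j => sprof K m acc p (f j)).
Proof.
  induction n as [|n IH]; simpl.
  - revert acc; induction m as [|m IH]; simpl; intros; auto.
    rewrite (sumR_ext K _ (fun _ => 0)), sumR_const; [lra|].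
    intros; rewrite IH; lra.
  - now rewrite sprof_add, IH.
Qed.

Variable p : nat -> nat -> R.
Hypothesis p_nonneg : forall i v, 0 <= p i v.
Hypothesis p_sum : forall v, sumR K (fun i => p i v) = 1.

Lemma sprof_le m acc f g :
  (forall a, f a <= g a) -> sprof K m acc p f <= sprof K m acc p g.
Proof.
  revert acc; induction m as [|m IH]; simpl; intros acc H; auto.
  apply sumR_le; intros. apply Rmult_le_compat_l; auto.
Qed.

Lemma sprof_const_ext m acc f c :
  (forall ext, f (acc ++ ext) = c) -> sprof K m acc p f = c.
Proof.
  revert acc; induction m as [|m IH]; simpl; intros acc H.
  - rewrite <- (app_nil_r acc). auto.
  - transitivity (sumR K (fun i => p i (length acc) * c)).
    + apply sumR_ext; intros. rewrite IH; auto. intros. rewrite <- app_assoc. apply H.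
    + rewrite sumR_mult_r, p_sum; lra.
Qed.

Lemma sprof_const m acc c : sprof K m acc p (fun _ => c) = c.
Proof. now apply sprof_const_ext. Qed.

Lemma sprof_marginal m acc v (g : nat -> R) :
  (length acc <= v < length acc + m)%nat ->
  sprof K m acc p (fun a => g (nth v a O)) = sumR K (fun i => p i v * g i).
Proof.
  revert acc; induction m as [|m IH]; simpl; intros acc Hv; [lia|].
  destruct (Nat.eq_dec v (length acc)) as [->|Hne].
  - apply sumR_ext; intros i Hi. f_equal.
    apply sprof_const_ext. intros ext. rewrite <- app_assoc. simpl.
    rewrite app_nth2, Nat.sub_diag by lia. reflexivity.
  - transitivity (sumR K (fun i => p i (length acc) * sumR K (fun j => p j v * g j))).
    + apply sumR_ext; intros. rewrite IH; auto. rewrite length_app; simpl; lia.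
    + rewrite sumR_mult_r, p_sum; lra.
Qed.

Lemma sprof_prodR m acc (f : nat -> nat -> R) :
  sprof K m acc p (fun a => prodR (length acc + m) (fun u => f u (nth u a O))) =
  prodR (length acc) (fun u => f u (nth u acc O)) *
  prodR m (fun j => sumR K (fun i => p i (length acc + j)%nat * f (length acc + j)%nat i)).
Proof.
  revert acc; induction m as [|m IH]; intros acc.
  - simpl. rewrite Nat.add_0_r. lra.
  - simpl sprof. rewrite prodR_succ_l, Nat.add_0_r, <- sumR_mult_r, <- sumR_mult_l.
    apply sumR_ext; intros i Hi.
    replace (length acc + S m)%nat with (length (acc ++ [i]) + m)%nat
      by (rewrite length_app; simpl; lia).
    rewrite IH, length_app. simpl length. rewrite Nat.add_1_r. simpl prodR.
    rewrite app_nth2, Nat.sub_diag by lia. simpl nth.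
    rewrite (prodR_ext (length acc) (fun u => f u (nth u (acc ++ [i]) O))
               (fun u => f u (nth u acc O))) by (intros; now rewrite app_nth1).
    rewrite (prodR_ext m (fun j => sumR K (fun i0 => p i0 (S (length acc + j)) * _))
               (fun j => sumR K (fun i0 => p i0 (length acc + S j)%nat
                                          * f (length acc + S j)%nat i0)))
      by (intros j _; now rewrite Nat.add_succ_r).
    ring.
Qed.

End ProductDistribution.

Section Walks.
Variables (adj : nat -> nat -> bool) (N : nat).
Hypothesis adj_lt : forall u v, adj u v = true -> (u < N)%nat /\ (v < N)%nat.
Hypothesis adj_sym : forall u v, adj u v = adj v u.

Fixpoint walk (k v u : nat) : Prop :=
  match k with
  | O => u = v
  | S k' => exists w, (w < N)%nat /\ walk k' v w /\ adj w u = true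
  end.

Lemma inball_walk s v u : inball adj N s v u = true <-> exists k, (k <= s)%nat /\ walk k v u.
Proof.
  revert u; induction s as [|s IH]; intros u; simpl.
  - rewrite Nat.eqb_eq. split.
    + intros; exists O; auto.
    + intros [k [Hk H]]. now replace k with O in H by lia.
  - rewrite orb_true_iff, existsb_exists. split.
    + intros [H|[w [Hw H]]].
      * apply IH in H. destruct H as [k [Hk H]]. exists k; split; auto.
      * apply andb_true_iff in H. destruct H as [H1 H2]. apply IH in H1.
        destruct H1 as [k [Hk H1]]. exists (S k). split; [lia|].
        apply in_seq in Hw. exists w. repeat split; auto; lia.
    + intros [k [Hk H]]. destruct (Nat.le_gt_cases k s).
      * left. apply IH. exists k; auto.
      * right. replace k with (S s) in H by lia. destruct H as [w [Hw [H1 H2]]].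
        exists w. split; [apply in_seq; lia|].
        apply andb_true_iff. split; auto. apply IH. exists s; auto.
Qed.

Lemma walk_cons k v u w : (w < N)%nat -> adj v w = true -> walk k w u -> walk (S k) v u.
Proof.
  revert u; induction k as [|k IH]; intros u Hw Hvw H.
  - simpl in *. subst. exists v. repeat split; auto. now apply (adj_lt v w).
  - destruct H as [w1 [Hw1 [H1 H2]]]. exists w1. repeat split; auto.
Qed.

Lemma walk_sym k v u : walk k v u -> walk k u v.
Proof.
  revert v u; induction k as [|k IH]; simpl; intros v u H; auto.
  destruct H as [w [Hw [H1 H2]]]. apply (walk_cons k u v w); auto.
  now rewrite adj_sym.
Qed.

Lemma inball_sym s v u : inball adj N s v u = inball adj N s u v.
Proof.
  enough (H : forall v u, inball adj N s v u = true -> inball adj N s u v = true).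
  { destruct (inball adj N s v u) eqn:E1, (inball adj N s u v) eqn:E2; auto.
    - now rewrite <- E2, H. - now rewrite <- E1, H. }
  intros v' u' Hb. apply inball_walk in Hb. destruct Hb as [k [Hk Hw]].
  apply inball_walk. exists k. split; auto. now apply walk_sym.
Qed.

End Walks.

Lemma inball_refl adj N s v : inball adj N s v v = true.
Proof. induction s as [|s IH]; simpl; [apply Nat.eqb_refl|]. now rewrite IH. Qed.

Definition lsum (l : list nat) (f : nat -> R) : R := fold_right (fun x acc => f x + acc) 0 l.

Lemma lsum_seq n f : lsum (seq 0 n) f = sumR n f.
Proof.
  induction n as [|n IH]; auto. rewrite seq_S. simpl sumR. rewrite <- IH.
  unfold lsum. rewrite fold_right_app. simpl.
  generalize (seq 0 n), (f n). intros l c. induction l; simpl; lra.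
Qed.

Lemma lsum_le l f g : (forall x, In x l -> f x <= g x) -> lsum l f <= lsum l g.
Proof.
  induction l as [|a l IH]; simpl; intros H; [lra|].
  pose proof (H a (or_introl eq_refl)). assert (lsum l f <= lsum l g) by auto. lra.
Qed.

Lemma lsum_nonneg l f : (forall x, In x l -> 0 <= f x) -> 0 <= lsum l f.
Proof.
  induction l as [|a l IH]; simpl; intros H; [lra|].
  pose proof (H a (or_introl eq_refl)). assert (0 <= lsum l f) by auto. lra.
Qed.

Lemma lsum_filter (P : nat -> bool) l f :
  lsum (filter P l) f = lsum l (fun u => if P u then f u else 0).
Proof. induction l as [|a l IH]; simpl; auto. destruct (P a); simpl; rewrite IH; lra. Qed.

Lemma lsum_partition (P : nat -> bool) l f :
  lsum l f = lsum (filter P l) f + lsum (filter (fun u => negb (P u)) l) f.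
Proof. induction l as [|a l IH]; simpl; [lra|]. destruct (P a); simpl; rewrite IH; lra. Qed.

Lemma lsum_mult_r l f c : lsum l (fun u => f u * c) = lsum l f * c.
Proof. induction l as [|a l IH]; simpl; [lra|]. rewrite IH; lra. Qed.

Lemma filter_length_lt (P : nat -> bool) l x :
  In x l -> P x = false -> (length (filter P l) < length l)%nat.
Proof.
  induction l as [|a l IH]; simpl; intros H Hx; [contradiction|].
  destruct H as [->|H].
  - rewrite Hx. pose proof (filter_length_le P l). lia.
  - destruct (P a); simpl; pose proof (IH H Hx); lia.
Qed.

Lemma exists_argmin (F : nat -> R) l :
  l <> [] -> exists x, In x l /\ forall y, In y l -> F x <= F y.
Proof.
  induction l as [|a l IH]; intros H; [congruence|]. destruct l as [|b l].
  - exists a. split; [left; auto|]. intros y [<-|[]]; lra.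
  - destruct IH as [x [Hx Hm]]; [congruence|]. destruct (Rle_dec (F a) (F x)).
    + exists a. split; [left; auto|]. intros y [<-|Hy]; [lra|]. specialize (Hm y Hy); lra.
    + exists x. split; [right; auto|]. intros y [<-|Hy]; [lra|]. auto.
Qed.

(* Weighted version of the bound  sum_v p v / P(N[v]) <= alpha  (Alon et al.): repeatedly pick
   the vertex of smallest neighbourhood mass and delete its neighbourhood. *)
Section GreedyIndependentSet.
Variable nb : nat -> nat -> bool.
Hypothesis nb_refl : forall v, nb v v = true.
Hypothesis nb_sym : forall u v, nb u v = nb v u.
Variable p : nat -> R.

Definition nb_mass (S : list nat) v := lsum S (fun u => if nb v u then p u else 0).

Definition mass_ratio_sum (S : list nat) := lsum S (fun v => p v / nb_mass S v).

Definition nb_independent (I : list nat) :=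
  forall u v, In u I -> In v I -> u <> v -> nb u v = false.

Lemma nb_mass_pos S v : (forall x, In x S -> 0 < p x) -> In v S -> 0 < nb_mass S v.
Proof.
  intros Hp. unfold nb_mass. induction S as [|a S IH]; simpl; intros H; [contradiction|].
  assert (0 <= lsum S (fun u => if nb v u then p u else 0)).
  { apply lsum_nonneg; intros x Hx. destruct (nb v x); [left; apply Hp; simpl; auto|lra]. }
  destruct H as [->|H].
  - rewrite nb_refl. pose proof (Hp v (or_introl eq_refl)). lra.
  - assert (0 <= (if nb v a then p a else 0))
      by (destruct (nb v a); [left; apply Hp; simpl; auto|lra]).
    pose proof (IH ltac:(intros; apply Hp; simpl; auto) H). lra.
Qed.

Lemma mass_ratio_sum_nb_le_1 S w :
  (forall x, In x S -> 0 < p x) -> In w S -> (forall y, In y S -> nb_mass S w <= nb_mass S y) ->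
  lsum (filter (nb w) S) (fun v => p v / nb_mass S v) <= 1.
Proof.
  intros Hp Hw Hmin. pose proof (nb_mass_pos S w Hp Hw).
  apply Rle_trans with (lsum (filter (nb w) S) (fun v => p v * / nb_mass S w)).
  - apply lsum_le; intros x Hx. apply filter_In in Hx as [Hx _].
    apply Rmult_le_compat_l; [left; auto|]. apply Rinv_le_contravar; auto.
  - rewrite lsum_mult_r, lsum_filter. fold (nb_mass S w). rewrite Rinv_r; lra.
Qed.

Lemma mass_ratio_sum_filter_le S w :
  (forall x, In x S -> 0 < p x) ->
  lsum (filter (fun u => negb (nb w u)) S) (fun v => p v / nb_mass S v) <=
  mass_ratio_sum (filter (fun u => negb (nb w u)) S).
Proof.
  intros Hp. set (S' := filter (fun u => negb (nb w u)) S).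
  assert (HS' : forall x, In x S' -> In x S) by (intros x Hx; apply filter_In in Hx; tauto).
  apply lsum_le; intros x Hx.
  assert (0 < nb_mass S' x) by (apply nb_mass_pos; auto).
  apply Rmult_le_compat_l; [left; auto|]. apply Rinv_le_contravar; auto.
  unfold nb_mass, S'. rewrite lsum_filter. apply lsum_le; intros y Hy.
  destruct (negb (nb w y)); [lra|]. destruct (nb x y); [left; auto|lra].
Qed.

Lemma greedy_independent_set S :
  NoDup S -> (forall x, In x S -> 0 < p x) ->
  exists I, NoDup I /\ incl I S /\ nb_independent I /\ mass_ratio_sum S <= INR (length I).
Proof.
  remember (length S) as n eqn:Hn. revert S Hn.
  induction n as [n IH] using Wf_nat.lt_wf_ind; intros S Hn Hnd Hp.
  destruct S as [|s0 S0] eqn:ES.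
  { exists []. repeat split; [constructor|intros ? []|intros u v []|].
    unfold mass_ratio_sum; simpl; lra. }
  rewrite <- ES in *.
  destruct (exists_argmin (nb_mass S) S) as [w [Hw Hmin]]; [rewrite ES; congruence|].
  set (S' := filter (fun u => negb (nb w u)) S).
  assert (Hlt : (length S' < n)%nat)
    by (subst n; apply (filter_length_lt _ S w); auto; now rewrite nb_refl).
  destruct (IH _ Hlt S' eq_refl) as [I' [HndI [HinI [HindI HfI]]]].
  { now apply NoDup_filter. }
  { intros x Hx. apply filter_In in Hx. apply Hp; tauto. }
  assert (Hout : forall x, In x I' -> nb w x = false).
  { intros x Hx. apply HinI, filter_In in Hx as [_ Hx]. now destruct (nb w x). }
  exists (w :: I'). repeat split.
  - constructor; auto. intros HI. apply Hout in HI. now rewrite nb_refl in HI.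
  - intros x [<-|Hx]; auto. apply HinI, filter_In in Hx; tauto.
  - intros u v [<-|Hu] [<-|Hv] Huv; auto.
    + congruence.
    + rewrite nb_sym; auto.
  - unfold mass_ratio_sum. rewrite (lsum_partition (nb w)). simpl length. rewrite S_INR.
    pose proof (mass_ratio_sum_nb_le_1 S w Hp Hw Hmin).
    pose proof (mass_ratio_sum_filter_le S w Hp). unfold S' in HfI. lra.
Qed.

End GreedyIndependentSet.

Section Algorithm.
Variables (adj : nat -> nat -> bool) (N K d : nat) (eta : R) (ell : nat -> nat -> R).

(* For a history h = [I_t; ...; I_1], [prob h] is p_{t+1}, [loss_est h] the estimate used in the
   update of round t and [normalizer h v] the normalising constant of that update. *)
Definition prob (h : list (list nat)) : nat -> nat -> R :=
  hd (fun _ _ => 0) (pseq adj N K d eta ell h).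

Definition loss_est (h : list (list nat)) (i v : nat) : R :=
  match h with
  | [] => 0
  | _ :: h' =>
      if Nat.ltb d (length h) then
        ell (length h - d)%nat i / qd adj N d (prob (skipn d h')) i v
        * Bd adj N d (nth d h []) i v
      else 0
  end.

Definition normalizer (h : list (list nat)) (v : nat) : R :=
  sumR K (fun j => prob (tl h) j v * exp (- eta * loss_est h j v)).

Lemma nth_pseq m h :
  (m <= length h)%nat -> nth m (pseq adj N K d eta ell h) (fun _ _ => 0) = prob (skipn m h).
Proof.
  revert m; induction h as [|a h IH]; intros m Hm.
  - simpl in Hm. now replace m with O by lia.
  - destruct m; [reflexivity|]. apply IH. simpl in Hm; lia.
Qed.

Lemma prob_cons a h i v :
  prob (a :: h) i v = prob h i v * exp (- eta * loss_est (a :: h) i v) / normalizer (a :: h) v.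
Proof.
  unfold normalizer, loss_est, prob at 1. cbn [pseq hd tl].
  destruct (Nat.ltb_spec d (length (a :: h))) as [Hd|Hd]; [|reflexivity].
  simpl length in *. rewrite nth_pseq by lia. reflexivity.
Qed.

(* p_{t+1} only depends on the actions played up to round t - d. *)
Lemma pseq_app_indep e1 e2 h :
  length e1 = length e2 -> (length e1 <= d)%nat ->
  pseq adj N K d eta ell (e1 ++ h) = pseq adj N K d eta ell (e2 ++ h).
Proof.
  revert e2; induction e1 as [|a1 e1 IH]; intros [|a2 e2] Hl Hd; simpl in Hl; try lia; auto.
  cbn [app pseq]. rewrite (IH e2) by (simpl in Hd; lia).
  assert (Hn : nth d (a1 :: e1 ++ h) [] = nth d (a2 :: e2 ++ h) []).
  { change (a1 :: e1 ++ h) with ((a1 :: e1) ++ h). change (a2 :: e2 ++ h) with ((a2 :: e2) ++ h).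
    rewrite !app_nth2 by (simpl in *; lia). simpl length. f_equal. lia. }
  rewrite Hn. simpl length. rewrite !length_app. now replace (length e1) with (length e2) by lia.
Qed.

(* p_{t+d+1} as a function of the history h up to round t: the d latest profiles do not matter. *)
Definition prob_delayed h := prob (repeat [] d ++ h).

Lemma prob_app_delayed e h : length e = d -> prob (e ++ h) = prob_delayed h.
Proof.
  intros He. unfold prob_delayed, prob.
  rewrite (pseq_app_indep e (repeat [] d)); auto; rewrite ?repeat_length; lia.
Qed.

Lemma qd_ge p i v : (v < N)%nat -> (forall u, 0 <= p i u <= 1) -> p i v <= qd adj N d p i v.
Proof.
  intros Hv Hp. unfold qd.
  assert (prodR N (fun u => if inball adj N d v u then 1 - p i u else 1) <= 1 - p i v).
  { eapply Rle_trans; [apply (prodR_le_term _ _ v); auto|].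
    - intros u _. destruct (inball adj N d v u); [pose proof (Hp u)|]; lra.
    - rewrite inball_refl. lra. }
  lra.
Qed.

Lemma Bd_cases a i v : Bd adj N d a i v = 0 \/ Bd adj N d a i v = 1.
Proof. unfold Bd. destruct existsb; auto. Qed.

Section LearningRate.
Variable T : nat.
Hypothesis K_pos : (1 <= K)%nat.
Hypothesis eta_nonneg : 0 <= eta.
Hypothesis eta_small : eta * INR K * exp 1 * (INR d + 1) <= 1.
Hypothesis ell_01 : forall t i, (1 <= t <= T)%nat -> (i < K)%nat -> 0 <= ell t i <= 1.

Lemma prob_pos h i v : 0 < prob h i v.
Proof.
  revert i; induction h as [|a h IH]; intros i.
  - apply Rinv_0_lt_compat, lt_0_INR. lia.
  - rewrite prob_cons. apply Rdiv_lt_0_compat.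
    + apply Rmult_lt_0_compat; [auto|apply exp_pos].
    + apply sumR_pos; [lia|]. intros. apply Rmult_lt_0_compat; [auto|apply exp_pos].
Qed.

Lemma prob_nonneg h i v : 0 <= prob h i v.
Proof. left; apply prob_pos. Qed.

Lemma normalizer_pos h v : 0 < normalizer h v.
Proof.
  apply sumR_pos; [lia|]. intros. apply Rmult_lt_0_compat; [apply prob_pos|apply exp_pos].
Qed.

Lemma prob_sum h v : sumR K (fun i => prob h i v) = 1.
Proof.
  destruct h as [|a h].
  - rewrite (sumR_ext K _ (fun _ => / INR K)), sumR_const by reflexivity.
    field. apply not_0_INR; lia.
  - rewrite (sumR_ext K _ (fun i => prob h i v * exp (- eta * loss_est (a :: h) i v)
                                    * / normalizer (a :: h) v)) by (intros; apply prob_cons).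
    rewrite sumR_mult_r. pose proof (normalizer_pos (a :: h) v) as Hz.
    unfold normalizer in *. simpl tl in *. field. lra.
Qed.

Lemma prob_le_1 h i v : (i < K)%nat -> prob h i v <= 1.
Proof.
  intros Hi. rewrite <- (prob_sum h v).
  apply (sumR_term_le K (fun i => prob h i v)); auto using prob_nonneg.
Qed.

Lemma prob_le_qd h i v : (i < K)%nat -> (v < N)%nat -> prob h i v <= qd adj N d (prob h) i v.
Proof. intros. apply qd_ge; auto. intros; split; [apply prob_nonneg|now apply prob_le_1]. Qed.

Lemma qd_pos h i v : (i < K)%nat -> (v < N)%nat -> 0 < qd adj N d (prob h) i v.
Proof. intros. eapply Rlt_le_trans; [apply prob_pos|now apply prob_le_qd]. Qed.

Lemma loss_est_short h i v : (length h <= d)%nat -> loss_est h i v = 0.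
Proof.
  intros H. destruct h as [|a h]; auto. cbn [loss_est].
  now rewrite (proj2 (Nat.ltb_ge _ _)).
Qed.

Lemma loss_est_long h i v : (d < length h)%nat ->
  loss_est h i v = ell (length h - d)%nat i / qd adj N d (prob (skipn d (tl h))) i v
                   * Bd adj N d (nth d h []) i v.
Proof.
  intros H. destruct h as [|a h]; simpl in H; [lia|]. cbn [loss_est tl].
  now rewrite (proj2 (Nat.ltb_lt _ _)) by (simpl; lia).
Qed.

Lemma loss_est_bounds h i v : (length h <= T)%nat -> (i < K)%nat -> (v < N)%nat ->
  0 <= loss_est h i v /\ prob (skipn d (tl h)) i v * loss_est h i v <= 1.
Proof.
  intros Hl Hi Hv. destruct (Nat.le_gt_cases (length h) d) as [Hs|Hs].
  { rewrite loss_est_short by auto. lra. }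
  rewrite loss_est_long by auto.
  pose proof (ell_01 (length h - d) i ltac:(lia) Hi) as Hell.
  pose proof (prob_le_qd (skipn d (tl h)) i v Hi Hv) as Hq.
  pose proof (prob_pos (skipn d (tl h)) i v) as Hp.
  set (l := ell (length h - d)%nat i) in *.
  set (q := qd adj N d (prob (skipn d (tl h))) i v) in *.
  set (p := prob (skipn d (tl h)) i v) in *.
  destruct (Bd_cases (nth d h []) i v) as [-> | ->]; [lra|].
  assert (p / q <= 1) by (apply Rmult_le_reg_r with q; [lra|]; field_simplify; lra).
  assert (0 <= l / q) by (unfold Rdiv; apply Rmult_le_pos; [lra|left; apply Rinv_0_lt_compat; lra]).
  split; [lra|].
  replace (p * (l / q * 1)) with (p / q * l) by (field; lra).
  assert (0 <= p / q) by (unfold Rdiv; apply Rmult_le_pos; [lra|left; apply Rinv_0_lt_compat; lra]).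
  nra.
Qed.

Lemma normalizer_le_1 h v : (length h <= T)%nat -> (v < N)%nat -> normalizer h v <= 1.
Proof.
  intros Hl Hv. unfold normalizer. rewrite <- (prob_sum (tl h) v). apply sumR_le; intros i Hi.
  pose proof (prob_pos (tl h) i v). pose proof (loss_est_bounds h i v Hl Hi Hv).
  assert (exp (- eta * loss_est h i v) <= 1) by (rewrite <- exp_0; apply exp_le_exp; nra).
  nra.
Qed.

Lemma normalizer_ge h v :
  (v < N)%nat -> 1 - eta * sumR K (fun j => prob (tl h) j v * loss_est h j v) <= normalizer h v.
Proof.
  intros Hv. unfold normalizer.
  rewrite <- (prob_sum (tl h) v), <- sumR_mult_l, <- sumR_sub.
  apply sumR_le; intros i Hi. pose proof (prob_pos (tl h) i v).
  pose proof (one_sub_le_exp_neg (eta * loss_est h i v)).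
  replace (- eta * loss_est h i v) with (- (eta * loss_est h i v)) by ring. nra.
Qed.

Lemma prob_cons_ge a h i v : (S (length h) <= T)%nat -> (i < K)%nat -> (v < N)%nat ->
  prob h i v * (1 - eta * loss_est (a :: h) i v) <= prob (a :: h) i v.
Proof.
  intros Hl Hi Hv. rewrite prob_cons.
  pose proof (normalizer_pos (a :: h) v). pose proof (normalizer_le_1 (a :: h) v Hl Hv).
  pose proof (prob_pos h i v). pose proof (one_sub_le_exp_neg (eta * loss_est (a :: h) i v)).
  replace (- eta * loss_est (a :: h) i v) with (- (eta * loss_est (a :: h) i v)) by ring.
  set (E := exp (- (eta * loss_est (a :: h) i v))) in *.
  set (Z := normalizer (a :: h) v) in *.
  assert (0 < E) by apply exp_pos.
  assert (prob h i v * E <= prob h i v * E / Z).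
  { apply Rmult_le_reg_r with Z; auto.
    replace (prob h i v * E / Z * Z) with (prob h i v * E) by (field; lra).
    assert (0 < prob h i v * E) by (apply Rmult_lt_0_compat; auto). nra. }
  nra.
Qed.

Lemma prob_cons_le a h i v : (S (length h) <= T)%nat -> (i < K)%nat -> (v < N)%nat ->
  prob (a :: h) i v <= prob h i v / normalizer (a :: h) v.
Proof.
  intros Hl Hi Hv. rewrite prob_cons. pose proof (normalizer_pos (a :: h) v).
  pose proof (prob_pos h i v). pose proof (loss_est_bounds (a :: h) i v Hl Hi Hv).
  assert (exp (- eta * loss_est (a :: h) i v) <= 1) by (rewrite <- exp_0; apply exp_le_exp; nra).
  apply Rmult_le_compat_r; [left; now apply Rinv_0_lt_compat|nra].
Qed.

(* Here eta K e (d + 1) <= 1 is used: one update shrinks the weights by at most d/(d+1). *)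
Lemma normalizer_ge_delay a h v : (S (length h) <= T)%nat -> (v < N)%nat ->
  ((d <= length h)%nat -> forall j, (j < K)%nat -> prob h j v <= exp 1 * prob (skipn d h) j v) ->
  INR d / (INR d + 1) <= normalizer (a :: h) v.
Proof.
  intros Hl Hv Hstab. pose proof (pos_INR d).
  assert (Hsum : sumR K (fun j => prob h j v * loss_est (a :: h) j v) <= INR K * exp 1).
  { rewrite <- sumR_const. apply sumR_le; intros j Hj.
    pose proof (exp_pos 1). destruct (Nat.le_gt_cases (length (a :: h)) d) as [Hs|Hs].
    { rewrite loss_est_short by auto. lra. }
    simpl length in Hs. pose proof (Hstab ltac:(lia) j Hj) as Hr.
    pose proof (loss_est_bounds (a :: h) j v Hl Hj Hv) as [HL Hb]. simpl tl in Hb.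
    apply Rle_trans with (exp 1 * prob (skipn d h) j v * loss_est (a :: h) j v); [nra|].
    rewrite Rmult_assoc. nra. }
  pose proof (normalizer_ge (a :: h) v Hv). simpl tl in *.
  assert (eta * sumR K (fun j => prob h j v * loss_est (a :: h) j v) <= 1 / (INR d + 1)).
  { apply Rle_trans with (eta * (INR K * exp 1)); [apply Rmult_le_compat_l; auto|].
    apply Rmult_le_reg_r with (INR d + 1); [lra|]. field_simplify; lra. }
  replace (INR d / (INR d + 1)) with (1 - 1 / (INR d + 1)) by (field; lra). lra.
Qed.

Lemma prob_le_pow_skipn h m i v :
  (length h <= T)%nat -> (m <= d)%nat -> (m <= length h)%nat -> (i < K)%nat -> (v < N)%nat ->
  prob h i v <= (1 + / INR d) ^ m * prob (skipn m h) i v.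
Proof.
  revert m i; induction h as [|a h IH]; intros m i Hl Hmd Hmh Hi Hv.
  - simpl in Hmh. replace m with O by lia. simpl. lra.
  - destruct m as [|m]; [simpl; lra|]. simpl in Hl, Hmh.
    assert (Hd : 0 < INR d) by (apply lt_0_INR; lia).
    set (c := 1 + / INR d).
    assert (Hc : 1 <= c) by (pose proof (Rinv_0_lt_compat _ Hd); unfold c; lra).
    assert (HZ : 1 <= c * normalizer (a :: h) v).
    { apply Rle_trans with (c * (INR d / (INR d + 1))); [right; unfold c; field; lra|].
      apply Rmult_le_compat_l; [lra|]. apply normalizer_ge_delay; auto. intros Hdh j Hj.
      eapply Rle_trans; [apply IH with (m := d); auto; lia|].
      apply Rmult_le_compat_r; [apply prob_nonneg|apply one_add_inv_pow_le_exp1]. }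
    assert (Hstep : prob (a :: h) i v <= c * prob h i v).
    { eapply Rle_trans; [apply prob_cons_le; auto|].
      pose proof (prob_pos h i v). pose proof (normalizer_pos (a :: h) v).
      set (Z := normalizer (a :: h) v) in *.
      replace (c * prob h i v) with (c * Z * prob h i v / Z) by (field; lra).
      apply Rmult_le_compat_r; [left; now apply Rinv_0_lt_compat|nra]. }
    pose proof (IH m i ltac:(lia) ltac:(lia) ltac:(lia) Hi Hv).
    simpl skipn. simpl pow. fold c in H |- *. nra.
Qed.

Lemma prob_delayed_le h i v : (d + length h <= T)%nat -> (i < K)%nat -> (v < N)%nat ->
  prob_delayed h i v <= exp 1 * prob h i v.
Proof.
  intros. unfold prob_delayed.
  eapply Rle_trans.
  { apply prob_le_pow_skipn with (m := d); rewrite ?length_app, ?repeat_length; auto; lia. }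
  rewrite skipn_app, repeat_length, Nat.sub_diag, skipn_all2 by (rewrite repeat_length; lia).
  apply Rmult_le_compat_r; [apply prob_nonneg|apply one_add_inv_pow_le_exp1].
Qed.

Lemma sprof_Bd_eq_qd h i v : (i < K)%nat ->
  sprof K N [] (prob h) (fun a => Bd adj N d a i v) = qd adj N d (prob h) i v.
Proof.
  intros Hi. set (f := fun u j => if inball adj N d v u && Nat.eqb j i then 0 else 1).
  rewrite (sprof_ext K N [] (prob h) _ (fun a => 1 + (-1) * prodR (length (@nil nat) + N)
                                                            (fun u => f u (nth u a O))))
    by (intros a; unfold Bd, f; rewrite existsb_indicator; simpl; lra).
  rewrite sprof_add, sprof_mult_l, sprof_const, sprof_prodR by (apply prob_nonneg || apply prob_sum).
  unfold qd. simpl. rewrite Rmult_1_l.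
  rewrite (prodR_ext N _ (fun u => if inball adj N d v u then 1 - prob h i u else 1)); [lra|].
  intros u Hu. unfold f. destruct (inball adj N d v u); simpl.
  - transitivity (sumR K (fun j => prob h j u)
                   - sumR K (fun j => if Nat.eqb j i then prob h j u else 0)).
    + rewrite <- sumR_sub. apply sumR_ext; intros j _. destruct (Nat.eqb j i); lra.
    + now rewrite prob_sum, sumR_delta.
  - transitivity (sumR K (fun j => prob h j u)); [apply sumR_ext; intros; lra|apply prob_sum].
Qed.

Lemma sprof_prob_marginal h v (g : nat -> R) : (v < N)%nat ->
  sprof K N [] (prob h) (fun a => g (nth v a O)) = sumR K (fun i => prob h i v * g i).
Proof. intros. apply sprof_marginal; [apply prob_sum|simpl; lia]. Qed.

Fixpoint expect (n : nat) (h : list (list nat)) (F : list (list nat) -> R) : R :=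
  match n with
  | O => F h
  | S n' => sprof K N [] (prob h) (fun a => expect n' (a :: h) F)
  end.

Lemma expect_ext n h F G :
  (forall e, length e = n -> F (e ++ h) = G (e ++ h)) -> expect n h F = expect n h G.
Proof.
  revert h; induction n as [|n IH]; intros h H; simpl.
  - apply (H []); auto.
  - apply sprof_ext; intros a. apply IH. intros e He.
    replace (e ++ a :: h) with ((e ++ [a]) ++ h) by now rewrite <- app_assoc.
    apply H. rewrite length_app; simpl; lia.
Qed.

Lemma expect_le n h F G :
  (forall e, length e = n -> F (e ++ h) <= G (e ++ h)) -> expect n h F <= expect n h G.
Proof.
  revert h; induction n as [|n IH]; intros h H; simpl.
  - apply (H []); auto.
  - apply sprof_le; [apply prob_nonneg|]. intros a. apply IH. intros e He.
    replace (e ++ a :: h) with ((e ++ [a]) ++ h) by now rewrite <- app_assoc.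
    apply H. rewrite length_app; simpl; lia.
Qed.

Lemma expect_const n h c : expect n h (fun _ => c) = c.
Proof.
  revert h; induction n as [|n IH]; intros h; simpl; auto.
  rewrite (sprof_ext _ _ _ _ _ (fun _ => c)) by auto.
  apply sprof_const, prob_sum.
Qed.

Lemma expect_const_ext n h F c :
  (forall e, length e = n -> F (e ++ h) = c) -> expect n h F = c.
Proof. intros H. rewrite <- (expect_const n h c). now apply expect_ext. Qed.

Lemma expect_add n h F G : expect n h (fun x => F x + G x) = expect n h F + expect n h G.
Proof.
  revert h; induction n as [|n IH]; intros h; simpl; auto.
  rewrite <- sprof_add. now apply sprof_ext.
Qed.

Lemma expect_mult_l n h c F : expect n h (fun x => c * F x) = c * expect n h F.
Proof.
  revert h; induction n as [|n IH]; intros h; simpl; auto.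
  rewrite <- sprof_mult_l. now apply sprof_ext.
Qed.

Lemma expect_sumR n h m (F : nat -> list (list nat) -> R) :
  expect n h (fun x => sumR m (fun j => F j x)) = sumR m (fun j => expect n h (F j)).
Proof.
  revert h; induction n as [|n IH]; intros h; simpl; auto.
  rewrite <- sprof_sumR. now apply sprof_ext.
Qed.

Lemma expect_split n1 n2 h F : expect (n1 + n2) h F = expect n1 h (fun h1 => expect n2 h1 F).
Proof. revert h; induction n1 as [|n1 IH]; intros h; simpl; auto. now apply sprof_ext. Qed.

Lemma expect_succ_r n h F :
  expect (S n) h F = expect n h (fun h1 => sprof K N [] (prob h1) (fun a => F (a :: h1))).
Proof.
  rewrite <- Nat.add_1_r, expect_split. apply expect_ext; intros; simpl. now apply sprof_ext.
Qed.

Lemma normalizer_le_quadratic a h v : (S (length h) <= T)%nat -> (v < N)%nat ->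
  normalizer (a :: h) v <=
  1 - eta * sumR K (fun i => prob h i v * loss_est (a :: h) i v)
  + eta ^ 2 * (3 / 4) * sumR K (fun i => prob h i v * loss_est (a :: h) i v ^ 2).
Proof.
  intros Hl Hv. unfold normalizer. simpl tl.
  rewrite <- (prob_sum h v) at 1. rewrite <- !sumR_mult_l, <- sumR_sub, <- sumR_add.
  apply sumR_le; intros i Hi. pose proof (prob_pos h i v).
  destruct (loss_est_bounds (a :: h) i v Hl Hi Hv) as [HL _].
  pose proof (exp_neg_le_quadratic (eta * loss_est (a :: h) i v) ltac:(nra)).
  replace (- eta * loss_est (a :: h) i v) with (- (eta * loss_est (a :: h) i v)) by ring.
  apply Rle_trans with (prob h i v * (1 - eta * loss_est (a :: h) i v
                                     + 3 / 4 * (eta * loss_est (a :: h) i v) ^ 2)).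
  - apply Rmult_le_compat_l; lra.
  - right; ring.
Qed.

Fixpoint sum_suffixes (f : list (list nat) -> R) (h : list (list nat)) : R :=
  match h with [] => 0 | _ :: h' => f h + sum_suffixes f h' end.

Lemma expect_sum_suffixes n h f :
  expect n h (sum_suffixes f) = sum_suffixes f h + sumR n (fun j => expect (S j) h f).
Proof.
  induction n as [|n IH]; [simpl; lra|].
  rewrite expect_succ_r.
  transitivity (expect n h (fun h1 => sprof K N [] (prob h1) (fun a => f (a :: h1)))
                + expect n h (sum_suffixes f)).
  - rewrite <- expect_add. apply expect_ext; intros e _. simpl sum_suffixes.
    rewrite sprof_add, sprof_const by apply prob_sum. reflexivity.
  - rewrite IH, <- expect_succ_r. change (sumR (S n) ?F) with (sumR n F + F n). lra.
Qed.

(* A history of length S j + d, split as e ++ a :: hp with |e| = d: the update of round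
   S j + d uses the profile a of round S j, weighted by the distribution p_{S j} = prob hp. *)
Lemma prob_tl_delayed e a hp : length e = d -> prob (tl (e ++ a :: hp)) = prob_delayed hp.
Proof.
  intros He. destruct e as [|b e].
  - simpl. rewrite <- (prob_app_delayed [] hp He). auto.
  - simpl. replace (e ++ a :: hp) with ((e ++ [a]) ++ hp) by now rewrite <- app_assoc.
    apply prob_app_delayed. rewrite length_app; simpl in *; lia.
Qed.

Lemma skipn_tl_delayed (e : list (list nat)) a hp : length e = d -> skipn d (tl (e ++ a :: hp)) = hp.
Proof.
  intros He. destruct e as [|b e].
  - simpl in *. now rewrite <- He.
  - simpl. rewrite skipn_app. simpl in He. rewrite skipn_all2 by lia.
    now replace (d - length e)%nat with 1%nat by lia.
Qed.

Lemma loss_est_delayed e a hp i v : length e = d ->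
  loss_est (e ++ a :: hp) i v = ell (S (length hp)) i / qd adj N d (prob hp) i v * Bd adj N d a i v.
Proof.
  intros He. rewrite loss_est_long by (rewrite length_app; simpl; lia).
  rewrite skipn_tl_delayed, app_nth2, He, Nat.sub_diag by (auto; lia). simpl nth.
  rewrite length_app. simpl length. do 3 f_equal. lia.
Qed.

Lemma expect_delayed j v (F : list (list nat) -> R) (Psi : (nat -> nat -> R) -> (nat -> R) -> R) :
  (forall h, F h = Psi (prob (tl h)) (fun i => loss_est h i v)) ->
  expect (S j + d) [] F =
  expect j [] (fun hp => sprof K N [] (prob hp) (fun a =>
    Psi (prob_delayed hp) (fun i => ell (S j) i / qd adj N d (prob hp) i v * Bd adj N d a i v))).
Proof.
  intros HF. rewrite expect_split, expect_succ_r. apply expect_ext; intros e He. rewrite app_nil_r.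
  apply sprof_ext; intros a. apply expect_const_ext. intros e2 He2.
  rewrite HF, prob_tl_delayed by auto. f_equal.
  apply functional_extensionality; intros i. now rewrite loss_est_delayed, He.
Qed.

Lemma expect_prob_delayed j (G : (nat -> nat -> R) -> R) :
  expect (j + d) [] (fun h => G (prob h)) = expect j [] (fun hp => G (prob_delayed hp)).
Proof.
  rewrite expect_split. apply expect_ext; intros e He.
  apply expect_const_ext; intros e2 He2. now rewrite prob_app_delayed.
Qed.

Definition est_loss_mean v (h : list (list nat)) :=
  sumR K (fun i => prob (tl h) i v * loss_est h i v).

Definition est_loss_sq_mean v (h : list (list nat)) :=
  sumR K (fun i => prob (tl h) i v * loss_est h i v ^ 2).

Definition mean_loss v t (h : list (list nat)) := sumR K (fun i => prob h i v * ell t i).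

Lemma expect_est_loss_mean j v : (v < N)%nat ->
  expect (S j + d) [] (est_loss_mean v) = expect (j + d) [] (mean_loss v (S j)).
Proof.
  intros Hv. unfold mean_loss.
  rewrite (expect_delayed j v _ (fun p L => sumR K (fun i => p i v * L i))) by reflexivity.
  rewrite (expect_prob_delayed j (fun p => sumR K (fun i => p i v * ell (S j) i))).
  apply expect_ext; intros e He. rewrite app_nil_r, sprof_sumR. apply sumR_ext; intros i Hi.
  rewrite (sprof_ext _ _ _ _ _ (fun a => prob_delayed e i v * (ell (S j) i / qd adj N d (prob e) i v)
                                         * Bd adj N d a i v)) by (intros; ring).
  rewrite sprof_mult_l, sprof_Bd_eq_qd by auto. pose proof (qd_pos e i v Hi Hv). field. lra.
Qed.

Lemma expect_loss_est j v i : (v < N)%nat -> (i < K)%nat ->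
  expect (S j + d) [] (fun h => loss_est h i v) = ell (S j) i.
Proof.
  intros Hv Hi. rewrite (expect_delayed j v _ (fun p L => L i)) by reflexivity.
  apply expect_const_ext; intros e He. rewrite app_nil_r.
  rewrite sprof_mult_l, sprof_Bd_eq_qd by auto. pose proof (qd_pos e i v Hi Hv). field. lra.
Qed.

Lemma expect_est_loss_sq_mean_le j v : (v < N)%nat -> (S j + d <= T)%nat ->
  expect (S j + d) [] (est_loss_sq_mean v) <=
  exp 1 * expect j [] (fun h => sumR K (fun i => prob h i v / qd adj N d (prob h) i v)).
Proof.
  intros Hv Hj.
  rewrite (expect_delayed j v _ (fun p L => sumR K (fun i => p i v * L i ^ 2))) by reflexivity.
  rewrite <- expect_mult_l. apply expect_le; intros e He. rewrite app_nil_r, sprof_sumR, <- sumR_mult_l.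
  apply sumR_le; intros i Hi.
  set (q := qd adj N d (prob e) i v). set (l := ell (S j) i).
  pose proof (qd_pos e i v Hi Hv) as Hq. fold q in Hq.
  rewrite (sprof_ext _ _ _ _ _ (fun a => (prob_delayed e i v * (l / q) ^ 2) * Bd adj N d a i v))
    by (intros a; destruct (Bd_cases a i v) as [-> | ->]; ring).
  rewrite sprof_mult_l, sprof_Bd_eq_qd by auto. fold q.
  pose proof (ell_01 (S j) i ltac:(lia) Hi). fold l in H.
  pose proof (prob_delayed_le e i v ltac:(lia) Hi Hv).
  assert (0 <= prob_delayed e i v) by apply prob_nonneg.
  replace (prob_delayed e i v * (l / q) ^ 2 * q) with (prob_delayed e i v * l ^ 2 / q) by (field; lra).
  unfold Rdiv. rewrite <- Rmult_assoc. apply Rmult_le_compat_r; [left; now apply Rinv_0_lt_compat|].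
  assert (l ^ 2 <= 1) by nra. nra.
Qed.

Lemma mean_loss_le_1 v t h : (1 <= t <= T)%nat -> mean_loss v t h <= 1.
Proof.
  intros Ht. unfold mean_loss. rewrite <- (prob_sum h v). apply sumR_le; intros i Hi.
  pose proof (ell_01 t i Ht Hi). pose proof (prob_pos h i v). nra.
Qed.

Lemma expect_mean_loss_le_1 n v t : (1 <= t <= T)%nat -> expect n [] (mean_loss v t) <= 1.
Proof.
  intros. rewrite <- (expect_const n [] 1). apply expect_le; intros. now apply mean_loss_le_1.
Qed.

Lemma expect_est_loss_mean_le_1 t v : (v < N)%nat -> (t <= T)%nat -> expect t [] (est_loss_mean v) <= 1.
Proof.
  intros Hv Ht. destruct (Nat.le_gt_cases t d).
  - rewrite (expect_const_ext t [] _ 0); [lra|]. intros e He. unfold est_loss_mean.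
    rewrite (sumR_ext K _ (fun _ => 0)), sumR_const; [ring|].
    intros. rewrite app_nil_r, loss_est_short by lia. ring.
  - replace t with (S (t - S d) + d)%nat by lia. rewrite expect_est_loss_mean by auto.
    apply expect_mean_loss_le_1. lia.
Qed.

(* By [prob_cons_ge], p_{t+1} >= p_t (1 - eta loss_est). *)
Lemma expect_mean_drift_step t v (cf : nat -> R) : (v < N)%nat -> (S t <= T)%nat ->
  (forall i, (i < K)%nat -> 0 <= cf i <= 1) ->
  expect t [] (fun h => sumR K (fun i => prob h i v * cf i)) <=
  expect (S t) [] (fun h => sumR K (fun i => prob h i v * cf i))
  + eta * expect (S t) [] (est_loss_mean v).
Proof.
  intros Hv Ht Hc. rewrite !(expect_succ_r t), <- expect_mult_l, <- expect_add.
  apply expect_le; intros e He. rewrite app_nil_r, <- sprof_mult_l, <- sprof_add.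
  rewrite <- (sprof_const K (prob e) (prob_sum e) N [] (sumR K (fun i => prob e i v * cf i))) at 1.
  apply sprof_le; [apply prob_nonneg|]. intros a. unfold est_loss_mean. simpl tl.
  rewrite <- sumR_mult_l, <- sumR_add. apply sumR_le; intros i Hi.
  pose proof (prob_cons_ge a e i v ltac:(lia) Hi Hv). pose proof (Hc i Hi).
  pose proof (loss_est_bounds (a :: e) i v ltac:(simpl; lia) Hi Hv) as [HL _].
  pose proof (prob_pos e i v).
  set (P := prob e i v) in *. set (L := loss_est (a :: e) i v) in *. set (Q := prob (a :: e) i v) in *.
  assert (0 <= P * L) by nra.
  assert (P * (1 - eta * L) * cf i <= Q * cf i) by (apply Rmult_le_compat_r; lra).
  assert (eta * (P * L) * cf i <= eta * (P * L)) by (rewrite <- (Rmult_1_r (eta * (P * L))) at 2;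
    apply Rmult_le_compat_l; [apply Rmult_le_pos|]; lra).
  nra.
Qed.

Lemma expect_mean_drift j m v (cf : nat -> R) : (v < N)%nat -> (j + m <= T)%nat ->
  (forall i, (i < K)%nat -> 0 <= cf i <= 1) ->
  expect j [] (fun h => sumR K (fun i => prob h i v * cf i)) <=
  expect (j + m) [] (fun h => sumR K (fun i => prob h i v * cf i))
  + eta * sumR m (fun r => expect (S (j + r)) [] (est_loss_mean v)).
Proof.
  intros Hv Hjm Hc. induction m as [|m IH].
  - rewrite Nat.add_0_r. simpl. lra.
  - pose proof (IH ltac:(lia)). pose proof (expect_mean_drift_step (j + m) v cf Hv ltac:(lia) Hc).
    rewrite Nat.add_succ_r. change (sumR (S m) ?F) with (sumR m F + F m). lra.
Qed.

Definition inv_qd_mass v j :=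
  expect j [] (fun h => sumR K (fun i => prob h i v / qd adj N d (prob h) i v)).

Hypothesis eta_pos : 0 < eta.

Section Agent.
Variables (v k : nat).
Hypothesis v_lt : (v < N)%nat.
Hypothesis k_lt : (k < K)%nat.

(* Increment of eta^-1 ln p(k, v) in one round, up to the quadratic remainder. *)
Definition potential_step (h : list (list nat)) : R :=
  sumR K (fun i => prob (tl h) i v * loss_est h i v) - loss_est h k v
  - eta * (3 / 4) * sumR K (fun i => prob (tl h) i v * loss_est h i v ^ 2).

Lemma ln_prob_ge h : (length h <= T)%nat ->
  - ln (INR K) + eta * sum_suffixes potential_step h <= ln (prob h k v).
Proof.
  induction h as [|a h IH]; intros Hl.
  - simpl. unfold prob; simpl. rewrite ln_Rinv by (apply lt_0_INR; lia). lra.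
  - simpl in Hl. specialize (IH ltac:(lia)). simpl sum_suffixes.
    rewrite prob_cons. pose proof (normalizer_pos (a :: h) v) as HZ. pose proof (prob_pos h k v).
    unfold Rdiv. rewrite !ln_mult, ln_exp, ln_Rinv; try apply exp_pos; auto.
    2: apply Rmult_lt_0_compat; auto; apply exp_pos.
    2: now apply Rinv_0_lt_compat.
    pose proof (normalizer_le_quadratic a h v Hl v_lt).
    pose proof (ln_le_sub_1 _ HZ). unfold potential_step at 1. simpl tl. nra.
Qed.

Lemma sum_suffixes_potential_le h : (length h <= T)%nat ->
  sum_suffixes potential_step h <= ln (INR K) / eta.
Proof.
  intros Hl. pose proof (ln_prob_ge h Hl).
  pose proof (ln_le_sub_1 _ (prob_pos h k v)). pose proof (prob_le_1 h k v k_lt).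
  apply Rmult_le_reg_l with eta; auto. field_simplify; lra.
Qed.

Lemma potential_step_short h : (length h <= d)%nat -> potential_step h = 0.
Proof.
  intros H. unfold potential_step. rewrite loss_est_short by auto.
  rewrite (sumR_ext K _ (fun _ => 0)), (sumR_ext K (fun i => _ * loss_est h i v ^ 2) (fun _ => 0)),
    sumR_const by (intros; rewrite loss_est_short by auto; ring). ring.
Qed.

Lemma sum_expect_potential_le : (d <= T)%nat ->
  sumR (T - d) (fun j => expect (S j + d) [] potential_step) <= ln (INR K) / eta.
Proof.
  intros HdT.
  pose proof (expect_sum_suffixes T [] potential_step) as H. simpl sum_suffixes in H.
  replace (sumR T _) with (sumR (d + (T - d)) (fun j => expect (S j) [] potential_step)) in H
    by (f_equal; lia).
  rewrite sumR_split in H.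
  rewrite (sumR_ext d _ (fun _ => 0)), sumR_const in H.
  2: { intros t Ht. apply expect_const_ext. intros e He.
       apply potential_step_short. rewrite length_app; simpl; lia. }
  rewrite (sumR_ext (T - d) (fun i => expect (S (d + i)) [] potential_step)
             (fun j => expect (S j + d) [] potential_step)) in H by (intros; f_equal; lia).
  assert (expect T [] (sum_suffixes potential_step) <= ln (INR K) / eta).
  { rewrite <- (expect_const T [] (ln (INR K) / eta)). apply expect_le; intros e He.
    apply sum_suffixes_potential_le. rewrite length_app; simpl; lia. }
  lra.
Qed.

Lemma expect_potential_step n : expect n [] potential_step =
  expect n [] (est_loss_mean v) + (-1) * expect n [] (fun h => loss_est h k v)
  + (- (eta * (3 / 4))) * expect n [] (est_loss_sq_mean v).
Proof.
  rewrite <- !expect_mult_l, <- !expect_add.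
  apply expect_ext; intros. unfold potential_step, est_loss_mean, est_loss_sq_mean. ring.
Qed.

Lemma expect_mean_loss_le j : (S j + d <= T)%nat ->
  expect j [] (mean_loss v (S j)) <=
  expect (S j + d) [] potential_step + ell (S j) k + eta * INR d
  + eta * (3 / 4) * exp 1 * inv_qd_mass v j.
Proof.
  intros Hj.
  pose proof (expect_mean_drift j d v (ell (S j)) v_lt ltac:(lia)
                ltac:(intros; apply ell_01; lia)) as Hd.
  fold (mean_loss v (S j)) in Hd. rewrite <- expect_est_loss_mean in Hd by auto.
  assert (sumR d (fun r => expect (S (j + r)) [] (est_loss_mean v)) <= INR d).
  { rewrite <- (Rmult_1_r (INR d)), <- sumR_const. apply sumR_le; intros.
    apply expect_est_loss_mean_le_1; auto; lia. }
  rewrite expect_potential_step, expect_loss_est by auto.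
  pose proof (expect_est_loss_sq_mean_le j v v_lt Hj). fold (inv_qd_mass v j) in H0.
  assert (eta * sumR d (fun r => expect (S (j + r)) [] (est_loss_mean v)) <= eta * INR d)
    by (apply Rmult_le_compat_l; lra).
  assert (eta * (3 / 4) * expect (S j + d) [] (est_loss_sq_mean v) <=
          eta * (3 / 4) * exp 1 * inv_qd_mass v j).
  { rewrite (Rmult_assoc _ (exp 1)). apply Rmult_le_compat_l; [lra|auto]. }
  lra.
Qed.

Lemma agent_regret_le :
  sumR T (fun j => expect j [] (mean_loss v (S j))) - sumR T (fun s => ell (S s) k) <=
  INR d + ln (INR K) / eta
  + sumR (T - d) (fun j => eta * INR d + eta * (3 / 4) * exp 1 * inv_qd_mass v j).
Proof.
  assert (0 <= ln (INR K) / eta).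
  { apply Rmult_le_pos; [apply ln_INR_nonneg; lia|left; now apply Rinv_0_lt_compat]. }
  assert (Hell : 0 <= sumR T (fun s => ell (S s) k)) by (apply sumR_nonneg; intros; apply ell_01; lia).
  destruct (Nat.le_gt_cases T d) as [HTd|HTd].
  - replace (T - d)%nat with O by lia. simpl sumR.
    apply Rle_trans with (sumR T (fun _ => 1) - 0).
    + apply Rplus_le_compat; [|lra]. apply sumR_le; intros. apply expect_mean_loss_le_1; lia.
    + rewrite sumR_const. pose proof (le_INR T d HTd). lra.
  - set (M := (T - d)%nat). replace T with (M + d)%nat by lia. rewrite !sumR_split.
    assert (sumR d (fun i => expect (M + i) [] (mean_loss v (S (M + i)))) <= INR d).
    { rewrite <- (Rmult_1_r (INR d)), <- sumR_const. apply sumR_le; intros.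
      apply expect_mean_loss_le_1; lia. }
    assert (0 <= sumR d (fun i => ell (S (M + i)) k)) by (apply sumR_nonneg; intros; apply ell_01; lia).
    pose proof (sum_expect_potential_le ltac:(lia)). fold M in H2.
    assert (sumR M (fun j => expect j [] (mean_loss v (S j))) <=
            sumR M (fun j => expect (S j + d) [] potential_step)
            + sumR M (fun j => ell (S j) k + (eta * INR d + eta * (3 / 4) * exp 1 * inv_qd_mass v j))).
    { rewrite <- sumR_add. apply sumR_le; intros j Hj.
      pose proof (expect_mean_loss_le j ltac:(lia)). lra. }
    rewrite sumR_add in H3. lra.
Qed.

End Agent.

Lemma exp_avg_loss_eq n h : exp_avg_loss adj N K d eta ell n h =
  sumR n (fun j => expect j h (fun h' => / INR N * sumR N (fun w => mean_loss w (S (length h')) h'))).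
Proof.
  revert h; induction n as [|n IH]; intros h; [reflexivity|].
  rewrite sumR_succ_l. cbn [exp_avg_loss expect]. fold (prob h). rewrite sprof_add. f_equal.
  - rewrite sprof_mult_l, sprof_sumR. f_equal. apply sumR_ext; intros w Hw.
    now apply sprof_prob_marginal.
  - rewrite (sprof_ext K N [] (prob h) _ _ (fun a => IH (a :: h))), sprof_sumR. reflexivity.
Qed.

Hypothesis adj_lt : forall u w, adj u w = true -> (u < N)%nat /\ (w < N)%nat.
Hypothesis adj_sym : forall u w, adj u w = adj w u.
Variable alpha : nat.
Hypothesis alpha_max : forall S, indep_Gd adj N d S -> (length S <= alpha)%nat.

Lemma sum_ball_ratio_le_alpha (p : nat -> R) : (forall u, (u < N)%nat -> 0 < p u) ->
  sumR N (fun w => p w / sumR N (fun u => if inball adj N d w u then p u else 0)) <= INR alpha.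
Proof.
  intros Hp.
  destruct (greedy_independent_set (inball adj N d) (inball_refl adj N d)
              (inball_sym adj N adj_lt adj_sym d) p (seq 0 N)) as [I [HnI [HinI [HindI Hf]]]].
  { apply seq_NoDup. }
  { intros x Hx. apply in_seq in Hx. apply Hp; lia. }
  unfold mass_ratio_sum, nb_mass in Hf. rewrite lsum_seq in Hf.
  rewrite (sumR_ext N _ (fun w => p w / lsum (seq 0 N) (fun u => if inball adj N d w u then p u else 0)))
    by (intros; now rewrite lsum_seq).
  eapply Rle_trans; [apply Hf|]. apply le_INR, alpha_max.
  repeat split; auto. intros u Hu. apply HinI, in_seq in Hu. lia.
Qed.

(* 1 - prod_u (1 - p u) >= 1 - exp (-P) >= P / (1 + P). *)
Lemma qd_ge_ball_mass (p : nat -> R) w : (forall u, 0 <= p u <= 1) ->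
  let P := sumR N (fun u => if inball adj N d w u then p u else 0) in
  P / (1 + P) <= 1 - prodR N (fun u => if inball adj N d w u then 1 - p u else 1).
Proof.
  intros Hp P.
  assert (HP : 0 <= P) by (apply sumR_nonneg; intros u _; destruct inball; [apply Hp|lra]).
  assert (Hprod : prodR N (fun u => if inball adj N d w u then 1 - p u else 1) <= exp (- P)).
  { unfold P. rewrite <- (Rmult_1_l (sumR N _)), Ropp_mult_distr_l, <- sumR_mult_l, <- prodR_exp.
    apply prodR_le; intros u _. destruct (inball adj N d w u); pose proof (Hp u).
    - pose proof (one_sub_le_exp_neg (p u)). rewrite <- Ropp_mult_distr_l, Rmult_1_l. lra.
    - rewrite Rmult_0_r, exp_0; lra. }
  assert (exp (- P) <= / (1 + P))
    by (rewrite exp_Ropp; apply Rinv_le_contravar; [lra|apply exp_ineq1_le]).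
  replace (P / (1 + P)) with (1 - / (1 + P)) by (field; lra). lra.
Qed.

Lemma sum_prob_div_qd_le h i : (i < K)%nat ->
  sumR N (fun w => prob h i w / qd adj N d (prob h) i w) <= INR alpha + sumR N (fun w => prob h i w).
Proof.
  intros Hi. set (p := fun u => prob h i u).
  pose proof (sum_ball_ratio_le_alpha p (fun u _ => prob_pos h i u)).
  apply Rle_trans with (sumR N (fun w => p w + p w / sumR N (fun u => if inball adj N d w u then p u else 0))).
  2: { rewrite sumR_add. unfold p in *. lra. }
  apply sumR_le; intros w Hw.
  assert (Hp : forall u, 0 <= p u <= 1) by (intros; split; [apply prob_nonneg|now apply prob_le_1]).
  pose proof (qd_ge_ball_mass p w Hp) as Hq. simpl in Hq.
  assert (Hpos : 0 < p w) by apply prob_pos.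
  set (P := sumR N (fun u => if inball adj N d w u then p u else 0)) in *.
  assert (HPw : p w <= P).
  { apply Rle_trans with ((fun u => if inball adj N d w u then p u else 0) w).
    { cbv beta. rewrite inball_refl. lra. }
    apply (sumR_term_le N (fun u => if inball adj N d w u then p u else 0) w); auto.
    intros u _. destruct inball; [apply Hp|lra]. }
  change (prob h i w / qd adj N d (prob h) i w)
    with (p w / (1 - prodR N (fun u => if inball adj N d w u then 1 - p u else 1))).
  assert (0 < P / (1 + P)) by (apply Rdiv_lt_0_compat; lra).
  apply Rle_trans with (p w / (P / (1 + P))).
  - apply Rmult_le_compat_l; [lra|]. now apply Rinv_le_contravar.
  - right. field. lra.
Qed.

Lemma sum_inv_qd_mass_le j : sumR N (fun w => inv_qd_mass w j) <= INR K * INR alpha + INR N.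
Proof.
  unfold inv_qd_mass. rewrite <- expect_sumR, <- (expect_const j [] (INR K * INR alpha + INR N)).
  apply expect_le; intros e _. rewrite sumR_comm.
  apply Rle_trans with (sumR K (fun i => INR alpha + sumR N (fun w => prob (e ++ []) i w))).
  - apply sumR_le; intros; now apply sum_prob_div_qd_le.
  - rewrite sumR_add, sumR_const, sumR_comm, (sumR_ext N _ (fun _ => 1)), sumR_const
      by (intros; apply prob_sum). lra.
Qed.

Lemma exp_avg_loss_sub_le k : (k < K)%nat -> (1 <= N)%nat ->
  exp_avg_loss adj N K d eta ell T [] - sumR T (fun s => ell (S s) k) <=
  INR d + ln (INR K) / eta
  + INR (T - d) * (eta * INR d + eta * (3 / 4) * exp 1 * (INR K * INR alpha + INR N) / INR N).
Proof.
  intros Hk HN. assert (HNpos : 0 < INR N) by (apply lt_0_INR; lia).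
  set (c := eta * (3 / 4) * exp 1).
  assert (Hc : 0 <= c) by (unfold c; pose proof (exp_pos 1); nra).
  assert (Havg : exp_avg_loss adj N K d eta ell T [] - sumR T (fun s => ell (S s) k) =
    / INR N * sumR N (fun w => sumR T (fun j => expect j [] (mean_loss w (S j)))
                               - sumR T (fun s => ell (S s) k))).
  { rewrite exp_avg_loss_eq, sumR_sub, sumR_const, <- sumR_comm.
    rewrite (sumR_ext T _ (fun j => / INR N * sumR N (fun w => expect j [] (mean_loss w (S j))))).
    - rewrite sumR_mult_l. field. lra.
    - intros j _. rewrite <- expect_sumR, <- expect_mult_l. apply expect_ext; intros e He.
      now rewrite length_app, He, Nat.add_0_r. }
  rewrite Havg. set (M := (T - d)%nat). set (A := INR d + ln (INR K) / eta).
  assert (Hagents : sumR N (fun w => sumR T (fun j => expect j [] (mean_loss w (S j)))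
                                     - sumR T (fun s => ell (S s) k))
          <= sumR N (fun w => A + sumR M (fun j => eta * INR d + c * inv_qd_mass w j))).
  { apply sumR_le; intros w Hw. now apply agent_regret_le. }
  assert (Hsplit : sumR N (fun w => A + sumR M (fun j => eta * INR d + c * inv_qd_mass w j)) =
          INR N * (A + INR M * (eta * INR d)) + c * sumR M (fun j => sumR N (fun w => inv_qd_mass w j))).
  { transitivity (sumR N (fun w => (A + INR M * (eta * INR d)) + c * sumR M (inv_qd_mass w))).
    - apply sumR_ext; intros w _.
      rewrite (sumR_add M (fun _ => eta * INR d) (fun j => c * inv_qd_mass w j)), sumR_const, sumR_mult_l.
      ring.
    - rewrite sumR_add, sumR_const, sumR_mult_l, sumR_comm. ring. }
  assert (Hmass : c * sumR M (fun j => sumR N (fun w => inv_qd_mass w j)) <=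
                  c * (INR M * (INR K * INR alpha + INR N))).
  { apply Rmult_le_compat_l; auto. rewrite <- sumR_const. apply sumR_le; intros.
    apply sum_inv_qd_mass_le. }
  apply Rle_trans with (/ INR N * (INR N * (A + INR M * (eta * INR d))
                                   + c * (INR M * (INR K * INR alpha + INR N)))).
  - apply Rmult_le_compat_l; [left; now apply Rinv_0_lt_compat|lra].
  - right. unfold A, c. field. lra.
Qed.

End LearningRate.
End Algorithm.

Lemma minR_attained n f : exists k, (k <= n)%nat /\ minR n f = f k.
Proof.
  induction n as [|n [k [Hk E]]]; [exists O; auto|]. simpl minR. rewrite E. unfold Rmin.
  destruct (Rle_dec (f k) (f (S n))); [exists k|exists (S n)]; split; auto.
Qed.

(* Uses 3/4 <= 1/(2(1 - 1/e)) and d + 3e/4 <= 3(d + 1). *)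
Lemma per_round_cost_le (K N d alpha : nat) (gamma : R) :
  (1 <= K)%nat -> (1 <= N)%nat -> 0 < gamma ->
  let eta := gamma / (INR K * exp 1 * (INR d + 1)) in
  eta * INR d + eta * (3 / 4) * exp 1 * (INR K * INR alpha + INR N) / INR N <=
  gamma * (INR alpha / (2 * (1 - exp (-1)) * (INR d + 1) * INR N) + 3 / (INR K * exp 1)).
Proof.
  intros HK HN Hg eta.
  assert (HKr : 1 <= INR K) by (apply (le_INR 1); lia).
  assert (HNr : 1 <= INR N) by (apply (le_INR 1); lia).
  pose proof (pos_INR d). pose proof (pos_INR alpha).
  assert (HE2 : 2 < exp 1) by (pose proof (exp_ineq1 1 ltac:(lra)); lra).
  pose proof exp_le_3 as HE3.
  replace (exp (-1)) with (/ exp 1) by (rewrite <- exp_Ropp; f_equal; lra).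
  set (E := exp 1) in *.
  assert (Hc : 0 < 2 * (1 - / E) <= 4 / 3).
  { assert (/ 3 <= / E) by (apply Rinv_le_contravar; lra).
    assert (/ E < / 2) by (apply Rinv_lt_contravar; lra). lra. }
  assert (Halpha : 3 / 4 * (gamma * INR alpha / ((INR d + 1) * INR N)) <=
                   / (2 * (1 - / E)) * (gamma * INR alpha / ((INR d + 1) * INR N))).
  { apply Rmult_le_compat_r.
    - apply Rmult_le_pos; [nra|]. left; apply Rinv_0_lt_compat; nra.
    - apply Rmult_le_reg_r with (2 * (1 - / E)); [lra|]. rewrite Rinv_l; lra. }
  assert (Hdelay : eta * (INR d + 3 / 4 * E) <= eta * (3 * (INR d + 1))).
  { apply Rmult_le_compat_l; [|lra]. left; unfold eta. apply Rdiv_lt_0_compat; [lra|].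
    apply Rmult_lt_0_compat; [apply Rmult_lt_0_compat|]; lra. }
  replace (eta * INR d + eta * (3 / 4) * E * (INR K * INR alpha + INR N) / INR N)
    with (3 / 4 * (gamma * INR alpha / ((INR d + 1) * INR N)) + eta * (INR d + 3 / 4 * E))
    by (unfold eta; field; repeat split; lra).
  replace (gamma * (INR alpha / (2 * (1 - / E) * (INR d + 1) * INR N) + 3 / (INR K * E)))
    with (/ (2 * (1 - / E)) * (gamma * INR alpha / ((INR d + 1) * INR N)) + eta * (3 * (INR d + 1)))
    by (unfold eta; field; repeat split; lra).
  lra.
Qed.

Theorem theorem1 (adj : nat -> nat -> bool) (N K d : nat) (gamma : R)
  (alpha : nat) (T : nat) (ell : nat -> nat -> R) :
  connected_graph adj N ->
  (2 <= K)%nat ->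
  0 < gamma <= 1 ->
  indep_number adj N d alpha ->
  (1 <= T)%nat ->
  (forall t i, (1 <= t <= T)%nat -> (i < K)%nat -> 0 <= ell t i <= 1) ->
  regret_coop adj N K d (gamma / (INR K * exp 1 * (INR d + 1))) ell T
  <= 2 * INR d + INR K * exp 1 * (INR d + 1) * ln (INR K) / gamma
     + gamma * (INR alpha / (2 * (1 - exp (-1)) * (INR d + 1) * INR N)
                + 3 / (INR K * exp 1)) * INR T.
Proof.
  intros [HN [Hlt [Hsym _]]] HK Hg [_ Halpha] HT Hell.
  assert (HKr : 2 <= INR K) by (apply (le_INR 2); lia).
  pose proof (pos_INR d). pose proof (exp_pos 1).
  set (eta := gamma / (INR K * exp 1 * (INR d + 1))).
  assert (Heta : 0 < eta).
  { apply Rdiv_lt_0_compat; [lra|]. apply Rmult_lt_0_compat; [apply Rmult_lt_0_compat|]; lra. }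
  assert (Heta_small : eta * INR K * exp 1 * (INR d + 1) <= 1)
    by (replace (eta * INR K * exp 1 * (INR d + 1)) with gamma by (unfold eta; field; lra); lra).
  destruct (minR_attained (K - 1) (fun i => sumR T (fun s => ell (S s) i))) as [k [Hk Hmin]].
  unfold regret_coop. fold eta. rewrite Hmin.
  pose proof (exp_avg_loss_sub_le adj N K d eta ell T ltac:(lia) ltac:(lra) Heta_small Hell Heta
                Hlt Hsym alpha Halpha k ltac:(lia) HN) as Hregret.
  pose proof (per_round_cost_le K N d alpha gamma ltac:(lia) HN ltac:(lra)) as Hcost. fold eta in Hcost.
  assert (Hln : ln (INR K) / eta = INR K * exp 1 * (INR d + 1) * ln (INR K) / gamma)
    by (unfold eta; field; repeat split; lra).
  assert (HTd : 0 <= INR (T - d) <= INR T) by (split; [apply pos_INR|apply le_INR; lia]).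
  assert (HX : 0 <= eta * INR d + eta * (3 / 4) * exp 1 * (INR K * INR alpha + INR N) / INR N).
  { assert (1 <= INR N) by (apply (le_INR 1); lia). pose proof (pos_INR alpha).
    apply Rplus_le_le_0_compat; [nra|]. apply Rmult_le_pos; [|left; apply Rinv_0_lt_compat; lra].
    pose proof (pos_INR K). apply Rmult_le_pos; [|nra]. apply Rmult_le_pos; lra. }
  rewrite Hln in Hregret. nra.
Qed.
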